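(* Let $n\ge3$, $k\ge0$, let $S\subseteq\mathrm{Inc}(A,B)$ be an independent set in $G_n^k$, and let $i\in[n+k]$. Then (1) $\mathrm{DFEL}(i,S)$ is a subset of $\mathrm{Inc}(A,B)$ that is independent in $G_n^k$; (2) $\mathrm{DLEF}(i,S)$ is a subset of $\mathrm{Inc}(A,B)$ that is independent in $G_n^k$; (3) $|\mathrm{DFEL}(i,S)|+|\mathrm{DLEF}(i,S)|=2|S|$.
   Context: For integers $n\ge3$, $k\ge0$, the crown $S_n^k$ is the poset with ground set $A\cup B$, $A=\{a_1,\dots,a_{n+k}\}$, $B=\{b_1,\dots,b_{n+k}\}$, indices cyclic modulo $n+k$; elements of $A$ are pairwise incomparable, as are elements of $B$, and $a_i$ is incomparable to $b_j$ when $j\in\{i,\dots,i+k\}$ (mod $n+k$), while $a_i<b_j$ otherwise. $\mathrm{Inc}(A,B)$ is the set of pairs $(a,b)\in A\times B$ with $a$ incomparable to $b$; $G_n^k$ has vertex set $\mathrm{Inc}(A,B)$ with $(a,b)$ adjacent to $(x,y)$ iff $a<y$ and $x<b$. For an independent $S$ and $i\in[n+k]$, an ordered pair $((a,b),(x,y))$ of elements of $S$ is an expansion blocking pair at $i$ if $a=a_i$, $y=b_{i+k}$, and $x<b$ in $S_n^k$. $\mathrm{FEBP}(i,S)$ is the set of $(a,b)\in S$ for which some $(x,y)\in S$ makes $((a,b),(x,y))$ an expansion blocking pair at $i$; $\mathrm{LEBP}(i,S)$ is the set of $(x,y)\in S$ for which some $(a,b)\in S$ makes $((a,b),(x,y))$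 an expansion blocking pair at $i$. Define $\mathrm{DFEL}(i,S)=(S-\mathrm{FEBP}(i,S))\cup\{(x,b_{i+k+1}):(x,b_{i+k})\in\mathrm{LEBP}(i,S)\}$ and $\mathrm{DLEF}(i,S)=(S-\mathrm{LEBP}(i,S))\cup\{(a_{i-1},b):(a_i,b)\in\mathrm{FEBP}(i,S)\}$. *)

From mathcomp Require Import all_boot.
Set Implicit Arguments. Unset Strict Implicit. Unset Printing Implicit Defensive.

(* Indices are 'I_(n+k) = {0,...,n+k-1}, read cyclically
   (index i stands for the paper's index i+1).  a_i is encoded by i : 'I_(n+k)
   in its role as an A-element, b_j by j in its role as a B-element.
   A vertex (a_i, b_j) of G_n^k / an element of A x B is a pair (i, j). *)

Section Crown.
Variables n k : nat.
Local Notation N := (n + k).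
Local Notation I := 'I_N.

(* a_i || b_j  iff  j \in {i, ..., i+k} (mod n+k) *)
Definition crown_inc (i j : I) : bool := (j + N - i) %% N <= k.
Definition crown_lt (i j : I) : bool := ~~ crown_inc i j.

Definition IncAB : {set I * I} := [set p | crown_inc p.1 p.2].

Definition Gadj (p q : I * I) : bool := crown_lt p.1 q.2 && crown_lt q.1 p.2.

Definition indepG (S : {set I * I}) : Prop :=
  S \subset IncAB /\ {in S &, forall p q, ~~ Gadj p q}.

Definition idx_add (i : I) (m : nat) : I := iter m (@ordS N) i.
Definition idx_pred (i : I) : I := @ord_pred N i.

Definition ebp (i : I) (p q : I * I) : bool :=
  [&& p.1 == i, q.2 == idx_add i k & crown_lt q.1 p.2].

Definition FEBP (i : I) (S : {set I * I}) : {set I * I} :=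
  [set p in S | [exists q in S, ebp i p q]].
Definition LEBP (i : I) (S : {set I * I}) : {set I * I} :=
  [set q in S | [exists p in S, ebp i p q]].

Definition DFEL (i : I) (S : {set I * I}) : {set I * I} :=
  (S :\: FEBP i S) :|: [set (q.1, idx_add i k.+1) | q in LEBP i S].
Definition DLEF (i : I) (S : {set I * I}) : {set I * I} :=
  (S :\: LEBP i S) :|: [set (idx_pred i, p.2) | p in FEBP i S].
End Crown.

From mathcomp Require Import all_boot zify.

Set Implicit Arguments.
Unset Strict Implicit.
Unset Printing Implicit Defensive.

(* DFEL moves the pairs of LEBP(i,S), whose B-element is b_{i+k}, to the single
   B-element b_{i+k+1}; DLEF moves the pairs of FEBP(i,S), whose A-element is
   a_i, to the single A-element a_{i-1}.  Pairs with a common element are never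
   adjacent.  A pair of S adjacent to a moved pair would form an expansion
   blocking pair at i with the pair it came from, so it has been removed; and a
   moved pair cannot already lie in S, since it would be adjacent to the
   blocking partner of its origin.  Both moves are injective, so
   |DFEL| = |S| - |FEBP| + |LEBP| and |DLEF| = |S| - |LEBP| + |FEBP|. *)

Section CrownArithmetic.
Variables n k : nat.
Local Notation N := (n + k).
Implicit Types i j x y : 'I_N.

Lemma crown_incP i j :
  reflect (i <= j <= i + k \/ j + N <= i + k) (crown_inc i j).
Proof.
rewrite /crown_inc; have := ltn_ord i; have := ltn_ord j.
case: (leqP i j) => ij jN iN.
  by rewrite -addnBAC // modnDr modn_small; [apply: (iffP idP); lia | lia].
by rewrite modn_small; [apply: (iffP idP); lia | lia].
Qed.

Lemma crown_ltP i j :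
  reflect (~ (i <= j <= i + k \/ j + N <= i + k)) (crown_lt i j).
Proof. by apply: (iffP negP) => h inc; apply: h; apply/crown_incP. Qed.

Lemma val_idx_add i m : idx_add i m = (i + m) %% N :> nat.
Proof.
elim: m => [|m IHm]; first by rewrite addn0 modn_small.
by rewrite /idx_add iterS /= -/(idx_add i m) IHm -addn1 modnDml addn1 addnS.
Qed.

Lemma idx_addP i m : m < N ->
  i + m < N /\ idx_add i m = i + m :> nat \/
  N <= i + m /\ idx_add i m + N = i + m :> nat.
Proof.
move=> mN; rewrite val_idx_add; have := ltn_ord i.
case: (ltnP (i + m) N) => h iN; first by left; rewrite modn_small.
by right; rewrite -{1}(subnK h) modnDr modn_small; lia.
Qed.

Lemma idx_predP i :
  (idx_pred i).+1 = i :> nat \/ (i = 0 :> nat /\ idx_pred i = N.-1 :> nat).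
Proof.
rewrite /idx_pred /ord_pred /=; have := ltn_ord i.
case: (posnP i) => [-> | i0] iN; first by right; rewrite modn_small; lia.
by left; rewrite -subn1 -addnBAC // modnDr modn_small; lia.
Qed.

Lemma crown_lt_next i : 1 < n -> crown_lt i (idx_add i k.+1).
Proof.
move=> n1; apply/crown_ltP; have := ltn_ord i.
have := @idx_addP i k.+1 ltac:(lia); lia.
Qed.

Lemma crown_lt_pred i : 1 < n -> crown_lt (idx_pred i) (idx_add i k).
Proof.
move=> n1; apply/crown_ltP; have := ltn_ord i.
have := @idx_addP i k ltac:(lia); have := idx_predP i; lia.
Qed.

Lemma crown_inc_next x i : 1 < n -> crown_inc x (idx_add i k) ->
  crown_inc x (idx_add i k.+1) = (x != i).
Proof.
move=> n1 /crown_incP inc; case: (eqVneq x i) => [-> | ne].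
  exact/negbTE/crown_lt_next.
rewrite [~~ _]/=; have {}ne : x <> i :> nat by move/val_inj; apply/eqP.
apply/crown_incP; have := ltn_ord i; have := ltn_ord x.
have := @idx_addP i k ltac:(lia); have := @idx_addP i k.+1 ltac:(lia); lia.
Qed.

Lemma crown_inc_pred i y : 1 < n -> crown_inc i y ->
  crown_inc (idx_pred i) y = (y != idx_add i k).
Proof.
move=> n1 /crown_incP inc; case: (eqVneq y (idx_add i k)) => [-> | ne].
  exact/negbTE/crown_lt_pred.
rewrite [~~ _]/=; have {}ne : y <> idx_add i k :> nat by move/val_inj; apply/eqP.
apply/crown_incP; have := ltn_ord i; have := ltn_ord y.
have := @idx_addP i k ltac:(lia); have := idx_predP i; lia.
Qed.

End CrownArithmetic.

Lemma cardsDU_disjoint (T : finType) (S A B : {set T}) :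
  A \subset S -> [disjoint S & B] -> #|(S :\: A) :|: B| = #|S| - #|A| + #|B|.
Proof.
move=> AS SB; rewrite cardsU cardsD (setIidPr AS).
suff -> : (S :\: A) :&: B = set0 by rewrite cards0 subn0.
by apply/disjoint_setI0; apply: disjointWl SB; apply: subsetDl.
Qed.

Section Independence.
Variables n k : nat.
Local Notation I := 'I_(n + k).
Implicit Types (p q : I * I) (S T : {set I * I}).

Lemma GadjC p q : Gadj p q = Gadj q p.
Proof. by rewrite /Gadj andbC. Qed.

Lemma indepG_inc S p : indepG S -> p \in S -> crown_inc p.1 p.2.
Proof. by case=> /subsetP SInc _ /SInc; rewrite inE. Qed.

Lemma indepG_nadj S p q : indepG S -> p \in S -> q \in S -> ~~ Gadj p q.
Proof. by case=> _; apply. Qed.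

Lemma indepG_subset S T : T \subset S -> indepG S -> indepG T.
Proof.
move=> /subsetP TS [SInc Sind]; split; last by move=> p q /TS pS /TS; apply: Sind.
by apply/subsetP => p /TS; apply/subsetP.
Qed.

Lemma indepGU S T : indepG S -> indepG T ->
  {in S & T, forall p q, ~~ Gadj p q} -> indepG (S :|: T).
Proof.
move=> [SInc Sind] [TInc Tind] ST; split; first by rewrite subUset SInc.
move=> p q; rewrite !inE => /orP[pS | pT] /orP[qS | qT]; auto.
by rewrite GadjC; apply: ST.
Qed.

Lemma indepG_imset_snd T b : {in T, forall p, crown_inc p.1 b} ->
  indepG [set (p.1, b) | p in T].
Proof.
move=> Tb; split.
  by apply/subsetP => _ /imsetP[p pT ->]; rewrite inE /= Tb.
by move=> _ _ /imsetP[p pT ->] /imsetP[q qT ->]; rewrite /Gadj /crown_lt /= Tb.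
Qed.

Lemma indepG_imset_fst T a : {in T, forall p, crown_inc a p.2} ->
  indepG [set (a, p.2) | p in T].
Proof.
move=> Ta; split.
  by apply/subsetP => _ /imsetP[p pT ->]; rewrite inE /= Ta.
by move=> _ _ /imsetP[p pT ->] /imsetP[q qT ->]; rewrite /Gadj /crown_lt /= !Ta.
Qed.

End Independence.

Section Exchange.
Variables n k : nat.
Hypothesis n_gt1 : 1 < n.
Local Notation I := 'I_(n + k).
Variables (S : {set I * I}) (i : I).
Hypothesis indS : indepG S.
Implicit Types p q : I * I.

Local Notation bK := (idx_add i k).
Local Notation bK1 := (idx_add i k.+1).
Local Notation aP := (idx_pred i).

Lemma ebpP p q : reflect [/\ p.1 = i, q.2 = bK & crown_lt q.1 p.2] (ebp i p q).
Proof. by apply: (iffP and3P) => -[/eqP-> /eqP-> ->]. Qed.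

Lemma FEBP_sub : FEBP i S \subset S.
Proof. by apply/subsetP => p; rewrite inE => /andP[]. Qed.

Lemma LEBP_sub : LEBP i S \subset S.
Proof. by apply/subsetP => q; rewrite inE => /andP[]. Qed.

Lemma FEBPP p : p \in FEBP i S -> exists2 q, q \in S & ebp i p q.
Proof. by rewrite inE => /andP[_ /existsP[q /andP[]]]; exists q. Qed.

Lemma LEBPP q : q \in LEBP i S -> exists2 p, p \in S & ebp i p q.
Proof. by rewrite inE => /andP[_ /existsP[p /andP[]]]; exists p. Qed.

Lemma ebp_FEBP p q : p \in S -> q \in S -> ebp i p q -> p \in FEBP i S.
Proof. by move=> pS qS e; rewrite inE pS; apply/existsP; exists q; rewrite qS. Qed.

Lemma ebp_LEBP p q : p \in S -> q \in S -> ebp i p q -> q \in LEBP i S.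
Proof. by move=> pS qS e; rewrite inE qS; apply/existsP; exists p; rewrite pS. Qed.

Lemma FEBP_fst p : p \in FEBP i S -> p.1 = i.
Proof. by case/FEBPP => q _ /ebpP[]. Qed.

Lemma LEBP_snd q : q \in LEBP i S -> q.2 = bK.
Proof. by case/LEBPP => p _ /ebpP[]. Qed.

Lemma LEBP_inc_next q : q \in LEBP i S -> crown_inc q.1 bK1.
Proof.
move=> qL; have [p pS /ebpP[p1 q2 lt]] := LEBPP qL.
rewrite crown_inc_next //; last by rewrite -q2 (indepG_inc indS (subsetP LEBP_sub _ qL)).
apply: contraTneq lt => ->; rewrite -p1 /crown_lt negbK.
exact: indepG_inc indS pS.
Qed.

Lemma FEBP_inc_pred p : p \in FEBP i S -> crown_inc aP p.2.
Proof.
move=> pF; have [q qS /ebpP[p1 q2 lt]] := FEBPP pF.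
rewrite crown_inc_pred //; last by rewrite -p1 (indepG_inc indS (subsetP FEBP_sub _ pF)).
apply: contraTneq lt => ->; rewrite -q2 /crown_lt negbK.
exact: indepG_inc indS qS.
Qed.

Lemma disjoint_moved_LEBP : [disjoint S & [set (q.1, bK1) | q in LEBP i S]].
Proof.
rewrite disjoints_subset; apply/subsetP => x xS; rewrite inE.
apply/imsetP => -[q qL xE]; have [p pS /ebpP[p1 _ lt]] := LEBPP qL.
have := indepG_nadj indS pS xS.
by rewrite xE /Gadj /= lt andbT p1 crown_lt_next.
Qed.

Lemma disjoint_moved_FEBP : [disjoint S & [set (aP, p.2) | p in FEBP i S]].
Proof.
rewrite disjoints_subset; apply/subsetP => x xS; rewrite inE.
apply/imsetP => -[p pF xE]; have [q qS /ebpP[_ q2 lt]] := FEBPP pF.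
have := indepG_nadj indS xS qS.
by rewrite xE /Gadj /= lt andbT q2 crown_lt_pred.
Qed.

Lemma nadj_moved_LEBP p q :
  p \in S :\: FEBP i S -> q \in LEBP i S -> ~~ Gadj p (q.1, bK1).
Proof.
rewrite inE => /andP[pF pS] qL; have qS := subsetP LEBP_sub _ qL.
have q2 := LEBP_snd qL.
apply: contra pF => /andP[/= ltp ltq]; apply: (ebp_FEBP pS qS).
have incK : crown_inc p.1 bK.
  by move: (indepG_nadj indS pS qS); rewrite /Gadj ltq andbT negbK q2.
have p1 : p.1 = i by apply/eqP; move: ltp; rewrite /crown_lt crown_inc_next // negbK.
by apply/ebpP.
Qed.

Lemma nadj_moved_FEBP q p :
  q \in S :\: LEBP i S -> p \in FEBP i S -> ~~ Gadj q (aP, p.2).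
Proof.
rewrite inE => /andP[qL qS] pF; have pS := subsetP FEBP_sub _ pF.
have p1 := FEBP_fst pF.
apply: contra qL => /andP[/= ltq ltP]; apply: (ebp_LEBP pS qS).
have incI : crown_inc i q.2.
  by move: (indepG_nadj indS pS qS); rewrite /Gadj ltq andbT negbK p1.
have q2 : q.2 = bK by apply/eqP; move: ltP; rewrite /crown_lt crown_inc_pred // negbK.
by apply/ebpP.
Qed.

Lemma indepG_DFEL : indepG (DFEL i S).
Proof.
apply: indepGU.
- exact: indepG_subset (subsetDl _ _) indS.
- by apply: indepG_imset_snd => q; apply: LEBP_inc_next.
- by move=> p _ pS /imsetP[q qL ->]; apply: nadj_moved_LEBP.
Qed.

Lemma indepG_DLEF : indepG (DLEF i S).
Proof.
apply: indepGU.
- exact: indepG_subset (subsetDl _ _) indS.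
- by apply: indepG_imset_fst => p; apply: FEBP_inc_pred.
- by move=> q _ qS /imsetP[p pF ->]; apply: nadj_moved_FEBP.
Qed.

Lemma card_DFEL : #|DFEL i S| = #|S| - #|FEBP i S| + #|LEBP i S|.
Proof.
rewrite cardsDU_disjoint ?FEBP_sub ?disjoint_moved_LEBP // card_in_imset //.
by move=> [x y] [x' y'] /LEBP_snd /= -> /LEBP_snd /= -> [->].
Qed.

Lemma card_DLEF : #|DLEF i S| = #|S| - #|LEBP i S| + #|FEBP i S|.
Proof.
rewrite cardsDU_disjoint ?LEBP_sub ?disjoint_moved_FEBP // card_in_imset //.
by move=> [x y] [x' y'] /FEBP_fst /= -> /FEBP_fst /= -> [->].
Qed.

End Exchange.

Theorem lemma4p8 (n k : nat) (hn : 3 <= n) (S : {set 'I_(n + k) * 'I_(n + k)})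
  (i : 'I_(n + k)) :
  indepG S ->
  [/\ indepG (DFEL i S), indepG (DLEF i S)
    & #|DFEL i S| + #|DLEF i S| = 2 * #|S|].
Proof.
move=> indS; have n_gt1 : 1 < n := ltnW hn.
split; [exact: indepG_DFEL | exact: indepG_DLEF |].
have := subset_leq_card (FEBP_sub S i); have := subset_leq_card (LEBP_sub S i).
by rewrite card_DFEL // card_DLEF //; lia.
Qed.
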